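(* Let $F : L_n \to \Delta K$ be a non-degenerate $2$-filtration, fix a dimension $q$, and fix grades $d,h\in L_n$ with $(1,1)\le d$ and $d\le h-(1,1)$. Set $a=d-(1,1)$ and $e=h-(1,1)$. If $adeh=0$, then $\mathsf{Dgm}_q F[d,h]=0$.
   Context: $K$ is a finite simplicial complex, coefficients in a field. $P_n=\{0<\dots<n\}$, $L_n=P_n\times P_n$ with product order, $\bot=(0,0)$, $\top=(n,n)$. $\mathsf{Int}\,L_n=\{[x,y]:x\le y\}$ with $[x,y]\le[z,w]$ iff $x\le z$, $y\le w$. A $2$-filtration is a monotone map $F$ from $L_n$ to subcomplexes of $K$ with $F(\bot)=\emptyset$, $F(\top)=K$. $ZB_qF[x,y]=\dim(Z_qF(x)\cap B_qF(y))$ for $y\ne\top$ and $\dim Z_qF(x)$ for $y=\top$ ($Z_q$, $B_q$ = $q$-cycles, $q$-boundaries). $\mathsf{Dgm}_qF$ is the unique function on $\mathsf{Int}\,L_n$ with $ZB_qF[z,w]=\sum_{[x,y]\le[z,w]}\mathsf{Dgm}_qF[x,y]$. Lower corners of a simplex $\sigma$ are the minimal elements of $\{x:\sigma\in F(x)\}$; $F$ is non-degenerate if any two distinct lower corners differ in both coordinates. Notation: $xy:=ZB_qF[x,y]$ for $x\le y$; $wxyz:=xz-xy-wz+wy$ for $w\le x\le y\le z$. *)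

From HB Require Import structures.
From mathcomp Require Import all_boot all_order all_algebra.
Set Implicit Arguments. Unset Strict Implicit. Unset Printing Implicit Defensive.
Import Order.TTheory GRing.Theory Num.Theory.
Local Open Scope ring_scope.

(* Vertices of K are 'I_N (ordered, which fixes simplex orientations);
   a simplex is a nonempty finite set of vertices. *)
Definition simplex (N : nat) := {set 'I_N}.

Definition is_complex (N : nat) (K : {set simplex N}) : bool :=
  [forall s in K, (s != set0) &&
     [forall t : simplex N, ((t != set0) && (t \subset s)) ==> (t \in K)]].

Definition chains (R : fieldType) (N : nat) := {ffun simplex N -> R^o}.

Definition chi (R : fieldType) (N : nat) (s : simplex N) : chains R N :=
  [ffun t => ((t == s)%:R : R)].

(* Incidence number [s : t] for t a codimension-1 face of s:
   (-1)^i where i is the position (in s) of the removed vertex w. *)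
Definition incid (R : fieldType) (N : nat) (t s : simplex N) : R :=
  if (t != set0) && (t \subset s) && (#|s| == #|t|.+1)%N then
    match [pick w in s :\: t] with
    | Some w => (-1) ^+ #|[set v in t | (v < w)%N]|
    | None => 0
    end
  else 0.

(* Simplicial boundary (on chains of positive dimension; the boundary of a
   vertex is 0, i.e. unreduced homology). *)
Definition bd_fun (R : fieldType) (N : nat) (c : chains R N) : chains R N :=
  [ffun t => \sum_(s : simplex N) c s * incid R t s].

Definition bd (R : fieldType) (N : nat) : 'End(chains R N) := linfun (@bd_fun R N).

Definition Cq (R : fieldType) (N q : nat) (L : {set simplex N}) : {vspace chains R N} :=
  <<[seq chi R s | s <- enum [set s in L | #|s| == q.+1]]>>%VS.

Definition Zq (R : fieldType) (N q : nat) (L : {set simplex N}) : {vspace chains R N} :=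
  (Cq R q L :&: lker (bd R N))%VS.

Definition Bq (R : fieldType) (N q : nat) (L : {set simplex N}) : {vspace chains R N} :=
  (bd R N @: Cq R q.+1 L)%VS.

(* Grades of L_n = P_n x P_n, encoded as pairs of nats in the box [0,n]^2. *)
Definition grade := (nat * nat)%type.
Definition inbox (n : nat) (x : grade) : bool := (x.1 <= n)%N && (x.2 <= n)%N.
Definition le2 (x y : grade) : bool := (x.1 <= y.1)%N && (x.2 <= y.2)%N.

Definition is_2filt (N n : nat) (K : {set simplex N}) (F : grade -> {set simplex N}) : Prop :=
  [/\ is_complex K,
      (forall x, inbox n x -> is_complex (F x) /\ F x \subset K),
      (forall x y, inbox n x -> inbox n y -> le2 x y -> F x \subset F y),
      F (0%N, 0%N) = set0 &
      F (n, n) = K].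

Definition lower_corner (N n : nat) (F : grade -> {set simplex N}) (s : simplex N) (x : grade) : Prop :=
  [/\ inbox n x, s \in F x &
      forall y, inbox n y -> le2 y x -> s \in F y -> y = x].

Definition nondegenerate2 (N n : nat) (F : grade -> {set simplex N}) : Prop :=
  forall (s : simplex N) x y, lower_corner n F s x -> lower_corner n F s y -> x <> y ->
    x.1 <> y.1 /\ x.2 <> y.2.

Definition ZB (R : fieldType) (N n q : nat) (F : grade -> {set simplex N}) (x y : grade) : int :=
  if y == (n, n) then (\dim (Zq R q (F x)))%:Z
  else (\dim (Zq R q (F x) :&: Bq R q (F y))%VS)%:Z.

(* D is the persistence diagram Dgm_q F: the function on Int L_n whose
   downward sums give ZB_q F (Moebius inversion; D is unique). *)
Definition is_Dgm (R : fieldType) (N n q : nat) (F : grade -> {set simplex N})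
  (D : grade -> grade -> int) : Prop :=
  forall z w, inbox n z -> inbox n w -> le2 z w ->
    ZB R n q F z w =
    \sum_(x1 < n.+1) \sum_(x2 < n.+1) \sum_(y1 < n.+1) \sum_(y2 < n.+1)
      (if [&& le2 (x1 : nat, x2 : nat) (y1 : nat, y2 : nat),
              le2 (x1 : nat, x2 : nat) z & le2 (y1 : nat, y2 : nat) w]
       then D (x1 : nat, x2 : nat) (y1 : nat, y2 : nat) else 0).

Definition wxyz (R : fieldType) (N n q : nat) (F : grade -> {set simplex N})
  (w x y z : grade) : int :=
  ZB R n q F x z - ZB R n q F x y - ZB R n q F w z + ZB R n q F w y.

From mathcomp Require Import all_boot all_order all_algebra.
From mathcomp Require Import zify.
Set Implicit Arguments. Unset Strict Implicit. Unset Printing Implicit Defensive.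
Import GRing.Theory.
Local Open Scope ring_scope.

(* Moebius inversion writes Dgm[d,h] as the mixed second difference of ZB over
   the 16 corners of the cells [a,d] x [e,h].  Each ZB[x,y] is the dimension of
   Z(x) :&: B(y) for two monotone families of subspaces, so modularity of the
   dimension gives wxyz >= 0 on every rectangle.  As wxyz is additive under
   subdivision of a rectangle, adeh = 0 forces wxyz = 0 on all its
   sub-rectangles: ZB[x,y] = ZB[x,e] + ZB[a,y] - ZB[a,e] on the cells, and the
   mixed difference of such a separable function vanishes. *)

Lemma le2_trans (x y z : grade) : le2 x y -> le2 y z -> le2 x z.
Proof. by rewrite /le2 => /andP[? ?] /andP[? ?]; apply/andP; split; lia. Qed.

Lemma inbox_le2 (n : nat) (x y : grade) : inbox n y -> le2 x y -> inbox n x.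
Proof. by rewrite /inbox /le2 => /andP[? ?] /andP[? ?]; apply/andP; split; lia. Qed.

Section MixedDifference.

Variable V : zmodType.

Definition mdiff (g : grade -> V) (z : grade) : V :=
  (g z - g (z.1 - 1, z.2)%N) - (g (z.1, z.2 - 1)%N - g (z.1 - 1, z.2 - 1)%N).

Definition cell (z x : grade) : bool := le2 (z.1 - 1, z.2 - 1)%N x && le2 x z.

Lemma eq_mdiff (g g' : grade -> V) (z : grade) :
  (forall x, cell z x -> g x = g' x) -> mdiff g z = mdiff g' z.
Proof. by move=> eq_g; rewrite /mdiff !eq_g // /cell /le2 /=; lia. Qed.

Lemma mdiff_const (c : V) (z : grade) : mdiff (fun=> c) z = 0.
Proof. by rewrite /mdiff !subrr. Qed.

Lemma mdiffD (u v : grade -> V) (z : grade) :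
  mdiff (fun x => u x + v x) z = mdiff u z + mdiff v z.
Proof.
have subrDD (a b c e : V) : (a + b) - (c + e) = (a - c) + (b - e).
  by rewrite opprD addrACA.
by rewrite /mdiff -!subrDD.
Qed.

Lemma mdiff2_separable (g : grade -> grade -> V) (u v : grade -> V) (z w : grade) :
  (forall x y, cell z x -> cell w y -> g x y = u x + v y) ->
  mdiff (fun y => mdiff (g^~ y) z) w = 0.
Proof.
move=> g_sep; rewrite (@eq_mdiff _ (fun=> mdiff u z)) ?mdiff_const // => y wy.
rewrite (@eq_mdiff _ (fun x => u x + v y)); last by move=> x zx; apply: g_sep.
by rewrite mdiffD mdiff_const addr0.
Qed.

Variable n : nat.

Definition lowsum (f : grade -> V) (z : grade) : V :=
  \sum_(x1 < n.+1 | (x1 <= z.1)%N) \sum_(x2 < n.+1 | (x2 <= z.2)%N) f (x1 : nat, x2 : nat).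

Lemma sum_ord_leB (f : nat -> V) (i : nat) : (0 < i <= n)%N ->
  \sum_(x < n.+1 | (x <= i)%N) f x - \sum_(x < n.+1 | (x <= i - 1)%N) f x = f i.
Proof.
case/andP=> i_gt0 i_le_n; rewrite (bigD1 (Ordinal (i_le_n : (i < n.+1)%N))) //=.
rewrite (eq_bigl (fun x : 'I_n.+1 => (x <= i - 1)%N)) ?addrK // => x.
by rewrite -val_eqE /=; lia.
Qed.

Lemma mdiff_lowsum (f : grade -> V) (z : grade) :
  inbox n z -> le2 (1, 1)%N z -> mdiff (lowsum f) z = f z.
Proof.
case: z => i j; rewrite /inbox /le2 /= => /andP[i_le_n j_le_n] /andP[i_gt0 j_gt0].
rewrite /mdiff /lowsum /=.
rewrite !(sum_ord_leB (fun x1 => \sum_(x2 < n.+1 | (x2 <= _)%N) f (x1, x2 : nat))) ?i_gt0 //.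
by rewrite (sum_ord_leB (fun x2 => f (i, x2))) ?j_gt0.
Qed.

Lemma sum_if_pull (I : finType) (b : bool) (F : I -> V) :
  \sum_i (if b then F i else 0) = if b then \sum_i F i else 0.
Proof. by case: b; rewrite // big1. Qed.

Lemma downsum_lowsum (D : grade -> grade -> V) (z w : grade) :
  \sum_(x1 < n.+1) \sum_(x2 < n.+1) \sum_(y1 < n.+1) \sum_(y2 < n.+1)
      (if [&& le2 (x1 : nat, x2 : nat) (y1 : nat, y2 : nat),
              le2 (x1 : nat, x2 : nat) z & le2 (y1 : nat, y2 : nat) w]
       then D (x1 : nat, x2 : nat) (y1 : nat, y2 : nat) else 0)
  = lowsum (fun x => lowsum (fun y => if le2 x y then D x y else 0) w) z.
Proof.
rewrite /lowsum [RHS]big_mkcond; apply: eq_bigr => x1 _.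
rewrite [in RHS]big_mkcond -sum_if_pull; apply: eq_bigr => x2 _.
rewrite [in RHS]big_mkcond -!sum_if_pull; apply: eq_bigr => y1 _.
rewrite [in RHS]big_mkcond -!sum_if_pull; apply: eq_bigr => y2 _.
rewrite /le2 /=; case: (x1 <= y1)%N; case: (x2 <= y2)%N;
  by case: (x1 <= z.1)%N; case: (x2 <= z.2)%N; case: (y1 <= w.1)%N; case: (y2 <= w.2)%N.
Qed.

Lemma mdiff2_lowsum (D : grade -> grade -> V) (d h : grade) :
  inbox n d -> inbox n h -> le2 (1, 1)%N d -> le2 (1, 1)%N h ->
  mdiff (fun y => mdiff (fun x => lowsum (fun x' => lowsum (D x') y) x) d) h = D d h.
Proof.
move=> d_in h_in d_ge1 h_ge1.
by rewrite (@eq_mdiff _ (lowsum (D d))) ?mdiff_lowsum // => y _; rewrite mdiff_lowsum.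
Qed.

End MixedDifference.

Lemma Dgm_mdiff (R : fieldType) (N n q : nat) (F : grade -> {set simplex N})
    (D : grade -> grade -> int) (d h : grade) :
  is_Dgm R n q F D -> inbox n h -> le2 (1, 1)%N d -> le2 d (h.1 - 1, h.2 - 1)%N ->
  D d h = mdiff (fun y => mdiff (fun x => ZB R n q F x y) d) h.
Proof.
move=> HD h_in d_ge1 d_le_e.
have e_le_h : le2 (h.1 - 1, h.2 - 1)%N h by rewrite /le2 /=; apply/andP; split; lia.
have d_in : inbox n d by apply: inbox_le2 h_in (le2_trans d_le_e e_le_h).
have h_ge1 : le2 (1, 1)%N h by apply: le2_trans d_ge1 (le2_trans d_le_e e_le_h).
set Dv := fun x y => if le2 x y then D x y else 0.
have -> : D d h = Dv d h by rewrite /Dv (le2_trans d_le_e e_le_h).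
rewrite -(mdiff2_lowsum Dv d_in h_in d_ge1 h_ge1).
apply: eq_mdiff => y /andP[e_le_y y_le_h]; apply: eq_mdiff => x /andP[_ x_le_d].
rewrite HD -?downsum_lowsum //.
- exact: inbox_le2 d_in x_le_d.
- exact: inbox_le2 h_in y_le_h.
- exact: le2_trans x_le_d (le2_trans d_le_e e_le_y).
Qed.

Lemma CqS (R : fieldType) (N q : nat) (L L' : {set simplex N}) :
  L \subset L' -> (Cq R q L <= Cq R q L')%VS.
Proof.
move=> sLL'; apply: sub_span => v /mapP [s]; rewrite mem_enum inE => /andP [sL sz] ->.
by apply: map_f; rewrite mem_enum inE sz (subsetP sLL').
Qed.

Lemma dimv_cap_cross (K : fieldType) (vT : vectType K) (Z1 Z2 B1 B2 : {vspace vT}) :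
  (Z1 <= Z2)%VS -> (B1 <= B2)%VS ->
  (\dim (Z1 :&: B2) + \dim (Z2 :&: B1) <= \dim (Z2 :&: B2) + \dim (Z1 :&: B1))%N.
Proof.
move=> sZ sB; rewrite -dimv_sum_cap; apply: leq_add; apply: dimvS.
  rewrite subv_add !subv_cap !capvSr !capvSl andbT /=.
  by rewrite (subv_trans (capvSl _ _) sZ) (subv_trans (capvSr _ _) sB).
by rewrite !subv_cap (subv_trans (capvSl _ _) (capvSl _ _))
  (subv_trans (capvSr _ _) (capvSr _ _)).
Qed.

Section Rectangles.

Variables (R : fieldType) (N n q : nat) (K : {set simplex N}).
Variable F : grade -> {set simplex N}.
Hypothesis HF : is_2filt n K F.

Definition Btop (y : grade) : {vspace chains R N} :=
  if y == (n, n) then fullv else Bq R q (F y).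

Lemma ZBE (x y : grade) : ZB R n q F x y = (\dim (Zq R q (F x) :&: Btop y))%:Z.
Proof. by rewrite /ZB /Btop; case: ifP; rewrite ?capvf. Qed.

Lemma ZqS (x x' : grade) :
  inbox n x' -> le2 x x' -> (Zq R q (F x) <= Zq R q (F x'))%VS.
Proof.
case: HF => _ _ F_mono _ _ x'_in x_le; apply: capvS => //; apply: CqS.
exact: F_mono (inbox_le2 x'_in x_le) x'_in x_le.
Qed.

Lemma BtopS (y y' : grade) : inbox n y' -> le2 y y' -> (Btop y <= Btop y')%VS.
Proof.
case: HF => _ _ F_mono _ _ y'_in y_le; rewrite /Btop.
have [_|y'_ntop] := eqVneq y' (n, n); first exact: subvf.
have [y_top|_] := eqVneq y (n, n).
  move: y'_ntop y'_in y_le; rewrite y_top; case: y' => a b.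
  by rewrite /inbox /le2 /= => /eqP ab_ntop /andP[? ?] /andP[? ?]; case: ab_ntop; congr pair; lia.
by apply: limgS; apply: CqS; apply: F_mono (inbox_le2 y'_in y_le) y'_in y_le.
Qed.

Lemma wxyz_ge0 (w x y z : grade) :
  inbox n x -> inbox n z -> le2 w x -> le2 y z -> 0 <= wxyz R n q F w x y z.
Proof.
move=> x_in z_in w_le_x y_le_z.
have := dimv_cap_cross (ZqS x_in w_le_x) (BtopS z_in y_le_z).
by rewrite /wxyz !ZBE; lia.
Qed.

Lemma wxyz_split (w m x y p z : grade) :
  wxyz R n q F w x y z =
  wxyz R n q F w m y p + wxyz R n q F m x y p +
  wxyz R n q F w m p z + wxyz R n q F m x p z.
Proof. by rewrite /wxyz; lia. Qed.

Lemma wxyz_eq0_sub (w m x y p z : grade) :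
  inbox n x -> inbox n z -> le2 w m -> le2 m x -> le2 y p -> le2 p z ->
  wxyz R n q F w x y z = 0 -> wxyz R n q F w m y p = 0.
Proof.
move=> x_in z_in w_le_m m_le_x y_le_p p_le_z; rewrite (wxyz_split w m x y p z).
have m_in := inbox_le2 x_in m_le_x; have p_in := inbox_le2 z_in p_le_z.
have := wxyz_ge0 m_in p_in w_le_m y_le_p.
have := wxyz_ge0 x_in p_in m_le_x y_le_p.
have := wxyz_ge0 m_in z_in w_le_m p_le_z.
have := wxyz_ge0 x_in z_in m_le_x p_le_z.
lia.
Qed.

End Rectangles.

Theorem mainTheorem3 (R : fieldType) (N n q : nat) (K : {set simplex N})
  (F : grade -> {set simplex N}) (D : grade -> grade -> int) (d h : grade) :
  is_2filt n K F -> nondegenerate2 n F -> is_Dgm R n q F D ->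
  inbox n d -> inbox n h ->
  le2 (1%N, 1%N) d -> le2 d (h.1 - 1, h.2 - 1)%N ->
  wxyz R n q F (d.1 - 1, d.2 - 1)%N d (h.1 - 1, h.2 - 1)%N h = 0 ->
  D d h = 0.
Proof.
move=> HF _ HD d_in h_in d_ge1 d_le_e adeh0.
rewrite (Dgm_mdiff HD) //.
set a := (d.1 - 1, d.2 - 1)%N; set e := (h.1 - 1, h.2 - 1)%N.
apply: (@mdiff2_separable _ _ (fun x => ZB R n q F x e - ZB R n q F a e) (ZB R n q F a))
  => x y /andP[a_le_x x_le_d] /andP[e_le_y y_le_h].
have := wxyz_eq0_sub HF d_in h_in a_le_x x_le_d e_le_y y_le_h adeh0.
by rewrite /wxyz -/a -/e; lia.
Qed.
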